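(* Let $\lambda\in(\frac16,\frac56)$ and $x\in[0,1]\setminus\mathcal E$. For $n\ge1$ let $m^+_n$ be the maximum of the absolute values of the slopes of $F^\lambda_n$. If $m_n(x)\neq0$, then $\sqrt{36\lambda^2-1}\le|m_n(x)|\le m^+_n$, and $m^+_n\asymp(6\lambda+1)^n$, i.e. there are constants $0<c\le C$ depending only on $\lambda$ with $c(6\lambda+1)^n\le m^+_n\le C(6\lambda+1)^n$ for all $n\ge1$. Moreover, if $\lambda>\frac13$, then for every $x\in[0,1]\setminus\widetilde{\mathcal E}$, $\lim_{n\to\infty}|m_n(x)|=+\infty$.
   Context: Construction: $F^\lambda_0\equiv0$ on $[0,1]$ (one interval of generation $0$). Given $F^\lambda_n$ with its $4^n$ closed intervals of generation $n$ (covering $[0,1]$, disjoint interiors, $F^\lambda_n$ affine on each), on each interval $[a,b]$ of generation $n$, with $\ell=b-a$ and slope $m$, $F^\lambda_{n+1}$ coincides with $F^\lambda_n$ at $a,a+\ell/3,a+2\ell/3,b$, equals $F^\lambda_n(a+\ell/2)+\lambda\ell\sqrt{1+m^2}$ at $a+\ell/2$, and is affine on $[a,a+\ell/3],[a+\ell/3,a+\ell/2],[a+\ell/2,a+2\ell/3],[a+2\ell/3,b]$. Dynamics: $T(x)=3x$ on $[0,\frac13)$, $6x-2$ on $[\frac13,\frac12)$, $4-6x$ on $[\frac12,\frac23)$, $3x-2$ on $[\frac23,1]$; $U(x)=0,1,2,3$ on these intervals respectively; $u_n(x)=U(T^nx)$; $\beta_{1,2}(x,n)=\#\{k<n:u_k(x)\in\{1,2\}\}$.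 $\mathcal E$ is the set of $x$ whose digit sequence $(u_n(x))$ is eventually constantly $0$ or eventually constantly $3$; $\widetilde{\mathcal E}\supset\mathcal E$ is the set of $x$ for which $(\beta_{1,2}(x,n))_n$ is eventually constant. For $x\notin\mathcal E$, $F^\lambda_n$ is differentiable at $x$ and $m_n(x)$ is its slope at $x$. *)

From Stdlib Require Import Reals Lra List.
From Coquelicot Require Import Coquelicot.
Import ListNotations.
Open Scope R_scope.

(* F^lambda_n is encoded by the sorted list of its 4^n + 1 nodes (x, F(x)),
   i.e. the endpoints of the 4^n closed intervals of generation n together
   with the values of F^lambda_n there; F^lambda_n is affine between
   consecutive nodes. *)

Definition node := (R * R)%type.

Definition piece_slope (p q : node) : R := (snd q - snd p) / (fst q - fst p).

Definition new_nodes (lam : R) (p q : node) : list node :=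
  let a := fst p in let b := fst q in let l := b - a in
  let m := piece_slope p q in
  [ (a + l / 3, snd p + m * (l / 3));
    (a + l / 2, snd p + m * (l / 2) + lam * l * sqrt (1 + m ^ 2));
    (a + 2 * l / 3, snd p + m * (2 * l / 3)) ].

Fixpoint refine (lam : R) (l : list node) : list node :=
  match l with
  | p :: ((q :: _) as rest) => p :: new_nodes lam p q ++ refine lam rest
  | _ => l
  end.

Fixpoint Fnodes (lam : R) (n : nat) : list node :=
  match n with
  | O => [(0, 0); (1, 0)]
  | S k => refine lam (Fnodes lam k)
  end.

Fixpoint slopes_of (l : list node) : list R :=
  match l with
  | p :: ((q :: _) as rest) => piece_slope p q :: slopes_of rest
  | _ => []
  end.

Definition mplus (lam : R) (n : nat) : R :=
  fold_right Rmax 0 (map Rabs (slopes_of (Fnodes lam n))).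

(* slope of the affine piece [a,b] of the node list containing x, with
   a <= x < b (the last piece also covers its right endpoint). *)
Fixpoint slope_at_list (l : list node) (x : R) : R :=
  match l with
  | p :: ((q :: rest') as rest) =>
      match rest' with
      | [] => piece_slope p q
      | _ => if Rlt_dec x (fst q) then piece_slope p q
             else slope_at_list rest x
      end
  | _ => 0
  end.

(* m_n(x) : the slope of F^lambda_n at x (for x not in E, x lies in the
   interior of an interval of generation n, so this is the derivative). *)
Definition mslope (lam : R) (n : nat) (x : R) : R :=
  slope_at_list (Fnodes lam n) x.

Definition Tmap (x : R) : R :=
  if Rlt_dec x (1/3) then 3 * x
  else if Rlt_dec x (1/2) then 6 * x - 2
  else if Rlt_dec x (2/3) then 4 - 6 * x
  else 3 * x - 2.

Definition Umap (x : R) : nat :=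
  if Rlt_dec x (1/3) then 0%nat
  else if Rlt_dec x (1/2) then 1%nat
  else if Rlt_dec x (2/3) then 2%nat
  else 3%nat.

Definition digit (n : nat) (x : R) : nat := Umap (Nat.iter n Tmap x).

Fixpoint beta12 (x : R) (n : nat) : nat :=
  match n with
  | O => O
  | S k => (beta12 x k +
            (if orb (Nat.eqb (digit k x) 1) (Nat.eqb (digit k x) 2) then 1 else 0))%nat
  end.

Definition in_E (x : R) : Prop :=
  (exists N, forall k, (N <= k)%nat -> digit k x = 0%nat) \/
  (exists N, forall k, (N <= k)%nat -> digit k x = 3%nat).

Definition in_Etilde (x : R) : Prop :=
  exists N, forall n, (N <= n)%nat -> beta12 x n = beta12 x N.

(* Refining a piece of slope [m] produces four pieces of slopes [m], [m + J],
   [m - J], [m] with [J = 6 lam sqrt (1 + m^2)].  Since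
   [(m +- J)^2 - (36 lam^2 - 1) = (sqrt (1 + m^2) +- 6 lam m)^2], every slope
   created by a jump has modulus at least [sqrt (36 lam^2 - 1)].  A jump
   multiplies [|m| + 1] by at most [6 lam + 1], and the jump in the direction
   of the sign of [m] gives [|m| + J >= (6 lam + 1) |m|], whence
   [m^+_n ~ (6 lam + 1)^n].
   At a fixed [x], the piece of generation [n + 1] containing [x] is the
   sub-piece selected by the digit [U t] of the relative position [t] of [x] in
   its piece of generation [n], and the slope jumps exactly when that digit is
   1 or 2.  The orbit [T^n x] follows [t] up to the reflection [t -> 1 - t], so
   outside [E~] infinitely many jumps occur, each multiplying [max 1 |m|] by at
   least [6 lam - 1 > 1] when [lam > 1/3]. *)

From Coquelicot Require Import Coquelicot.
From Stdlib Require Import Reals Lra Lia List Classical.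
Import ListNotations.
Open Scope R_scope.
Set Bullet Behavior "Strict Subproofs".

Definition piece := (node * node)%type.

Definition pslope (P : piece) : R := piece_slope (fst P) (snd P).

Definition nondegenerate (P : piece) : Prop := fst (fst P) < fst (snd P).

Definition relpos (P : piece) (x : R) : R :=
  (x - fst (fst P)) / (fst (snd P) - fst (fst P)).

Fixpoint pieces (l : list node) : list piece :=
  match l with
  | p :: ((q :: _) as rest) => (p, q) :: pieces rest
  | _ => []
  end.

Definition split_piece (lam : R) (P : piece) : list piece :=
  pieces (fst P :: new_nodes lam (fst P) (snd P) ++ [snd P]).

Fixpoint piece_at (ps : list piece) (x : R) : piece :=
  match ps with
  | [] => ((0, 0), (0, 0))
  | [P] => P
  | P :: ps' => if Rlt_dec x (fst (snd P)) then P else piece_at ps' x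
  end.

Lemma refine_head lam q l : exists t, refine lam (q :: l) = q :: t.
Proof. destruct l; eexists; reflexivity. Qed.

Lemma pieces_refine lam l :
  pieces (refine lam l) = flat_map (split_piece lam) (pieces l).
Proof.
  induction l as [|p [|q l] IH]; try reflexivity.
  destruct (refine_head lam q l) as [t Ht].
  change (refine lam (p :: q :: l)) with (p :: new_nodes lam p q ++ refine lam (q :: l)).
  rewrite Ht in *. cbn in IH |- *. now rewrite IH.
Qed.

Lemma slopes_of_pieces l : slopes_of l = map pslope (pieces l).
Proof.
  induction l as [|p [|q l] IH]; try reflexivity.
  change (piece_slope p q :: slopes_of (q :: l)
          = pslope (p, q) :: map pslope (pieces (q :: l))).
  now rewrite IH.
Qed.

Lemma slope_at_list_pieces l x : slope_at_list l x = pslope (piece_at (pieces l) x).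
Proof.
  induction l as [|p [|q [|r l]] IH];
    try (unfold pslope, piece_slope; cbn; unfold Rdiv; ring); try reflexivity.
  change (slope_at_list (p :: q :: r :: l) x)
    with (if Rlt_dec x (fst q) then piece_slope p q else slope_at_list (q :: r :: l) x).
  rewrite IH. cbn. now destruct Rlt_dec.
Qed.

Definition slope_jump (lam m : R) : R := 6 * lam * sqrt (1 + m ^ 2).

Lemma split_piece_nondegenerate lam P :
  nondegenerate P -> Forall nondegenerate (split_piece lam P).
Proof.
  destruct P as [[a fa] [b fb]]; unfold nondegenerate; cbn; intros H.
  repeat constructor; cbn; lra.
Qed.

Lemma split_piece_slopes lam P : nondegenerate P ->
  let m := pslope P in
  map pslope (split_piece lam P) = [m; m + slope_jump lam m; m - slope_jump lam m; m].
Proof.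
  destruct P as [[a fa] [b fb]]; unfold nondegenerate, pslope, slope_jump; cbn; intros H.
  set (m := piece_slope (a, fa) (b, fb)). set (s := sqrt (1 + m ^ 2)).
  assert (Hm : fb = fa + m * (b - a)) by (unfold m, piece_slope; cbn; field; lra).
  clearbody s m. subst fb. unfold piece_slope; cbn.
  f_equal; [|f_equal; [|f_equal; [|f_equal]]]; field; lra.
Qed.

Lemma split_piece_relpos lam P x : nondegenerate P ->
  let t := relpos P x in
  map (fun P' => relpos P' x) (split_piece lam P) = [3 * t; 6 * t - 2; 6 * t - 3; 3 * t - 2].
Proof.
  destruct P as [[a fa] [b fb]]; unfold nondegenerate, relpos; cbn; intros H.
  f_equal; [|f_equal; [|f_equal; [|f_equal]]]; field; lra.
Qed.

Lemma piece_at_split_piece lam P x : nondegenerate P ->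
  piece_at (split_piece lam P) x = nth (Umap (relpos P x)) (split_piece lam P) P.
Proof.
  destruct P as [[a fa] [b fb]]; unfold nondegenerate, relpos, Umap; cbn; intros H.
  set (t := (x - a) / (b - a)).
  assert (Hx : x = a + t * (b - a)) by (unfold t; field; lra).
  clearbody t; subst x.
  repeat destruct Rlt_dec; cbn; try reflexivity; exfalso; nra.
Qed.

Lemma piece_at_split_piece_app lam P ps x : nondegenerate P -> ps <> [] ->
  piece_at (split_piece lam P ++ ps) x =
  if Rlt_dec x (fst (snd P)) then piece_at (split_piece lam P) x else piece_at ps x.
Proof.
  destruct P as [[a fa] [b fb]], ps as [|Q ps]; unfold nondegenerate; cbn; intros H Hps;
    [easy|].
  repeat destruct Rlt_dec; cbn; try reflexivity; exfalso; lra.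
Qed.

Lemma piece_at_flat_map_split lam ps x : ps <> [] -> Forall nondegenerate ps ->
  piece_at (flat_map (split_piece lam) ps) x = piece_at (split_piece lam (piece_at ps x)) x.
Proof.
  induction ps as [|P [|Q ps] IH]; intros Hps Hnd; [easy| |].
  - cbn [flat_map]. now rewrite app_nil_r.
  - inversion_clear Hnd as [|? ? HP Hnd'].
    change (flat_map (split_piece lam) (P :: Q :: ps))
      with (split_piece lam P ++ flat_map (split_piece lam) (Q :: ps)).
    rewrite piece_at_split_piece_app, IH by easy.
    cbn [piece_at]. now destruct Rlt_dec.
Qed.

Lemma piece_at_In ps x : ps <> [] -> In (piece_at ps x) ps.
Proof.
  induction ps as [|P [|Q ps] IH]; intros Hps; [easy|now left|].
  cbn [piece_at]. destruct Rlt_dec; [now left|right; now apply IH].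
Qed.


Lemma pieces_Fnodes_S lam n :
  pieces (Fnodes lam (S n)) = flat_map (split_piece lam) (pieces (Fnodes lam n)).
Proof. apply pieces_refine. Qed.

Lemma pieces_Fnodes_nondegenerate lam n : Forall nondegenerate (pieces (Fnodes lam n)).
Proof.
  induction n as [|n IH].
  - repeat constructor. unfold nondegenerate; cbn; lra.
  - rewrite pieces_Fnodes_S, Forall_flat_map.
    eapply Forall_impl; [|exact IH]. apply split_piece_nondegenerate.
Qed.

Lemma pieces_Fnodes_nil lam n : pieces (Fnodes lam n) <> [].
Proof.
  induction n as [|n IH]; [discriminate|].
  rewrite pieces_Fnodes_S. destruct (pieces (Fnodes lam n)); [easy|discriminate].
Qed.

Lemma fold_Rmax_ub a l : In a l -> a <= fold_right Rmax 0 l.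
Proof.
  induction l as [|b l IH]; intros H; [easy|].
  destruct H as [<-|H]; cbn; [apply Rmax_l|].
  eapply Rle_trans; [now apply IH|apply Rmax_r].
Qed.

Lemma fold_Rmax_lub K l : 0 <= K -> Forall (fun a => a <= K) l -> fold_right Rmax 0 l <= K.
Proof. intros HK Hl. induction Hl; cbn; [easy|now apply Rmax_lub]. Qed.

Lemma mplus_pieces lam n :
  mplus lam n = fold_right Rmax 0 (map (fun P => Rabs (pslope P)) (pieces (Fnodes lam n))).
Proof. unfold mplus. now rewrite slopes_of_pieces, map_map. Qed.

Lemma sqrt_1_plus_sq_sqr m : sqrt (1 + m ^ 2) * sqrt (1 + m ^ 2) = 1 + m ^ 2.
Proof. apply sqrt_sqrt. pose proof (pow2_ge_0 m). lra. Qed.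

Lemma sqrt_1_plus_sq_ge m : Rmax 1 (Rabs m) <= sqrt (1 + m ^ 2).
Proof.
  pose proof (pow2_ge_0 m).
  apply Rmax_lub.
  - rewrite <- sqrt_1 at 1. apply sqrt_le_1_alt. lra.
  - rewrite <- sqrt_Rsqr_abs. apply sqrt_le_1_alt. unfold Rsqr. nra.
Qed.

Lemma sqrt_1_plus_sq_le m : sqrt (1 + m ^ 2) <= 1 + Rabs m.
Proof.
  pose proof (Rabs_pos m).
  rewrite <- (sqrt_Rsqr (1 + Rabs m)) by lra.
  apply sqrt_le_1_alt. unfold Rsqr. rewrite <- (pow2_abs m). nra.
Qed.

Definition jumped (lam m m' : R) : Prop :=
  m' = m + slope_jump lam m \/ m' = m - slope_jump lam m.

Lemma jumped_abs_ge_sqrt lam m m' : jumped lam m m' -> sqrt (36 * lam ^ 2 - 1) <= Rabs m'.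
Proof.
  unfold jumped, slope_jump. pose proof (sqrt_1_plus_sq_sqr m) as Hs.
  set (s := sqrt (1 + m ^ 2)) in *.
  assert (Hs0 : s * s - 1 - m ^ 2 = 0) by lra.
  intros Hm'. rewrite <- sqrt_Rsqr_abs. apply sqrt_le_1_alt. unfold Rsqr.
  (* [(m +- 6 lam s)^2 - (36 lam^2 - 1) = (s +- 6 lam m)^2] *)
  destruct Hm' as [-> | ->].
  - replace ((m + 6 * lam * s) * (m + 6 * lam * s)) with
      ((s + 6 * lam * m) ^ 2 + (36 * lam ^ 2 - 1) + (36 * lam ^ 2 - 1) * (s * s - 1 - m ^ 2))
      by ring.
    pose proof (pow2_ge_0 (s + 6 * lam * m)). rewrite Hs0. lra.
  - replace ((m - 6 * lam * s) * (m - 6 * lam * s)) with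
      ((s - 6 * lam * m) ^ 2 + (36 * lam ^ 2 - 1) + (36 * lam ^ 2 - 1) * (s * s - 1 - m ^ 2))
      by ring.
    pose proof (pow2_ge_0 (s - 6 * lam * m)). rewrite Hs0. lra.
Qed.

Lemma jumped_abs_le lam m m' : 0 <= lam -> jumped lam m m' ->
  Rabs m' + 1 <= (6 * lam + 1) * (Rabs m + 1).
Proof.
  unfold jumped, slope_jump. intros Hl Hm'.
  pose proof (sqrt_1_plus_sq_le m). pose proof (sqrt_pos (1 + m ^ 2)).
  set (s := sqrt (1 + m ^ 2)) in *.
  assert (Rabs m' <= Rabs m + 6 * lam * s).
  { destruct Hm' as [-> | ->]; unfold Rabs; repeat destruct Rcase_abs; nra. }
  nra.
Qed.

Lemma jumped_aligned lam m : 0 <= lam ->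
  exists m', jumped lam m m' /\ Rabs m' = Rabs m + slope_jump lam m.
Proof.
  unfold jumped, slope_jump. intros Hl. pose proof (sqrt_pos (1 + m ^ 2)).
  set (s := sqrt (1 + m ^ 2)) in *.
  assert (0 <= 6 * lam * s) by (apply Rmult_le_pos; lra).
  destruct (Rle_or_lt 0 m).
  - exists (m + 6 * lam * s). split; [now left|]. rewrite !Rabs_right; lra.
  - exists (m - 6 * lam * s). split; [now right|]. rewrite !Rabs_left; lra.
Qed.

Lemma jumped_abs_expands lam m m' : 1/6 <= lam -> jumped lam m m' ->
  (6 * lam - 1) * Rmax 1 (Rabs m) <= Rabs m'.
Proof.
  unfold jumped, slope_jump. intros Hl Hm'.
  pose proof (sqrt_1_plus_sq_ge m). pose proof (Rmax_r 1 (Rabs m)).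
  set (s := sqrt (1 + m ^ 2)) in *.
  assert (6 * lam * s - Rabs m <= Rabs m').
  { destruct Hm' as [-> | ->]; unfold Rabs; repeat destruct Rcase_abs; nra. }
  nra.
Qed.

Lemma pieces_Fnodes_0 lam : pieces (Fnodes lam 0) = [((0, 0), (1, 0))].
Proof. reflexivity. Qed.

Lemma pslope_Fnodes_0 : pslope ((0, 0), (1, 0)) = 0.
Proof. unfold pslope, piece_slope; cbn. field. Qed.

Lemma In_pieces_Fnodes_nondegenerate lam n P :
  In P (pieces (Fnodes lam n)) -> nondegenerate P.
Proof. apply Forall_forall, pieces_Fnodes_nondegenerate. Qed.

Lemma pieces_Fnodes_S_parent lam n P' : In P' (pieces (Fnodes lam (S n))) ->
  exists P, In P (pieces (Fnodes lam n)) /\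
    (pslope P' = pslope P \/ jumped lam (pslope P) (pslope P')).
Proof.
  rewrite pieces_Fnodes_S, in_flat_map. intros (P & HP & HP').
  exists P. split; [exact HP|].
  apply (in_map pslope) in HP'.
  rewrite split_piece_slopes in HP' by (eapply In_pieces_Fnodes_nondegenerate; eauto).
  unfold jumped. cbn in HP'. intuition congruence.
Qed.

Lemma pieces_Fnodes_S_aligned lam n P : 0 <= lam -> In P (pieces (Fnodes lam n)) ->
  exists P', In P' (pieces (Fnodes lam (S n))) /\
    Rabs (pslope P') = Rabs (pslope P) + slope_jump lam (pslope P).
Proof.
  intros Hl HP. destruct (jumped_aligned lam (pslope P) Hl) as (m' & Hm' & Habs).
  assert (Hin : In m' (map pslope (split_piece lam P))).
  { rewrite split_piece_slopes by (eapply In_pieces_Fnodes_nondegenerate; eauto).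
    destruct Hm' as [-> | ->]; cbn; tauto. }
  apply in_map_iff in Hin as (P' & <- & HP').
  exists P'. split; [|exact Habs].
  rewrite pieces_Fnodes_S, in_flat_map. eauto.
Qed.

Lemma pieces_Fnodes_slope_le lam n P : 0 <= lam -> In P (pieces (Fnodes lam n)) ->
  Rabs (pslope P) + 1 <= (6 * lam + 1) ^ n.
Proof.
  intros Hl. revert P. induction n as [|n IH]; intros P' HP'.
  - rewrite pieces_Fnodes_0 in HP'. destruct HP' as [<-|[]].
    rewrite pslope_Fnodes_0, Rabs_R0. cbn. lra.
  - destruct (pieces_Fnodes_S_parent lam n P' HP') as (P & HP & [Heq | Hjump]);
      specialize (IH P HP); cbn [pow].
    + rewrite Heq. pose proof (Rabs_pos (pslope P)). nra.
    + apply Rle_trans with ((6 * lam + 1) * (Rabs (pslope P) + 1)).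
      * now apply jumped_abs_le.
      * apply Rmult_le_compat_l; lra.
Qed.

Lemma pieces_Fnodes_steep lam n : 0 <= lam ->
  exists P, In P (pieces (Fnodes lam (S n))) /\ 6 * lam * (6 * lam + 1) ^ n <= Rabs (pslope P).
Proof.
  intros Hl. induction n as [|n (P & HP & Hsteep)].
  - destruct (pieces_Fnodes_S_aligned lam 0 ((0, 0), (1, 0)) Hl) as (P & HP & Habs);
      [now left|].
    exists P. split; [exact HP|].
    rewrite Habs. unfold slope_jump. rewrite pslope_Fnodes_0, Rabs_R0.
    replace (1 + 0 ^ 2) with 1 by ring. rewrite sqrt_1. cbn. lra.
  - destruct (pieces_Fnodes_S_aligned lam (S n) P Hl HP) as (P' & HP' & Habs).
    exists P'. split; [exact HP'|].
    rewrite Habs. unfold slope_jump.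
    pose proof (sqrt_1_plus_sq_ge (pslope P)). pose proof (Rmax_r 1 (Rabs (pslope P))).
    assert (6 * lam * Rabs (pslope P) <= 6 * lam * sqrt (1 + pslope P ^ 2))
      by (apply Rmult_le_compat_l; lra).
    assert ((6 * lam + 1) * (6 * lam * (6 * lam + 1) ^ n) <= (6 * lam + 1) * Rabs (pslope P))
      by (apply Rmult_le_compat_l; lra).
    rewrite <- tech_pow_Rmult. lra.
Qed.

Lemma mplus_le lam n : 0 <= lam -> mplus lam n + 1 <= (6 * lam + 1) ^ n.
Proof.
  intros Hl. rewrite mplus_pieces.
  assert (1 <= (6 * lam + 1) ^ n) by (apply pow_R1_Rle; lra).
  enough (fold_right Rmax 0 (map (fun P => Rabs (pslope P)) (pieces (Fnodes lam n)))
          <= (6 * lam + 1) ^ n - 1) by lra.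
  apply fold_Rmax_lub; [lra|]. apply Forall_map, Forall_forall. intros P HP.
  pose proof (pieces_Fnodes_slope_le lam n P Hl HP). lra.
Qed.

Lemma mplus_ge lam n : 0 <= lam -> 6 * lam * (6 * lam + 1) ^ n <= mplus lam (S n).
Proof.
  intros Hl. destruct (pieces_Fnodes_steep lam n Hl) as (P & HP & Hsteep).
  rewrite mplus_pieces. eapply Rle_trans; [exact Hsteep|].
  apply fold_Rmax_ub, in_map_iff. eauto.
Qed.

Lemma mplus_asymptotics lam : 0 < lam ->
  exists c C : R, 0 < c /\ c <= C /\
    forall n : nat, (1 <= n)%nat ->
      c * (6 * lam + 1) ^ n <= mplus lam n <= C * (6 * lam + 1) ^ n.
Proof.
  intros Hl. exists (6 * lam / (6 * lam + 1)), 1.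
  split; [apply Rdiv_lt_0_compat; lra|].
  split; [apply Rmult_le_reg_r with (6 * lam + 1); [lra|]; field_simplify; lra|].
  intros [|n] Hn; [lia|]. split.
  - replace (6 * lam / (6 * lam + 1) * (6 * lam + 1) ^ S n) with (6 * lam * (6 * lam + 1) ^ n)
      by (rewrite <- tech_pow_Rmult; field; lra).
    apply mplus_ge. lra.
  - pose proof (mplus_le lam (S n) ltac:(lra)). lra.
Qed.


Definition piece_of (lam : R) (n : nat) (x : R) : piece := piece_at (pieces (Fnodes lam n)) x.

Definition zone_shift (t : R) : R :=
  match Umap t with
  | 0%nat => 3 * t
  | 1%nat => 6 * t - 2
  | 2%nat => 6 * t - 3
  | _ => 3 * t - 2
  end.

Definition mid_zone (t : R) : Prop := (Umap t = 1 \/ Umap t = 2)%nat.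

Lemma Umap_cases t : (Umap t = 0 \/ Umap t = 1 \/ Umap t = 2 \/ Umap t = 3)%nat.
Proof. unfold Umap. repeat destruct Rlt_dec; tauto. Qed.

Lemma piece_of_In lam n x : In (piece_of lam n x) (pieces (Fnodes lam n)).
Proof. apply piece_at_In, pieces_Fnodes_nil. Qed.

Lemma piece_of_nondegenerate lam n x : nondegenerate (piece_of lam n x).
Proof. eapply In_pieces_Fnodes_nondegenerate, piece_of_In. Qed.

Lemma mslope_piece_of lam n x : mslope lam n x = pslope (piece_of lam n x).
Proof. apply slope_at_list_pieces. Qed.

Lemma piece_of_S lam n x :
  let P := piece_of lam n x in
  piece_of lam (S n) x = nth (Umap (relpos P x)) (split_piece lam P) P.
Proof.
  intros P. unfold piece_of at 1. rewrite pieces_Fnodes_S, piece_at_flat_map_split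
    by (apply pieces_Fnodes_nil || apply pieces_Fnodes_nondegenerate).
  apply piece_at_split_piece, piece_of_nondegenerate.
Qed.

Lemma relpos_piece_of_0 lam x : relpos (piece_of lam 0 x) x = x.
Proof. unfold relpos, piece_of; cbn. field. Qed.

Lemma mslope_0 lam x : mslope lam 0 x = 0.
Proof. apply pslope_Fnodes_0. Qed.

Lemma relpos_piece_of_S lam n x :
  relpos (piece_of lam (S n) x) x = zone_shift (relpos (piece_of lam n x) x).
Proof.
  rewrite piece_of_S. set (P := piece_of lam n x).
  rewrite <- (map_nth (fun P' => relpos P' x)), split_piece_relpos
    by apply piece_of_nondegenerate.
  unfold zone_shift.
  destruct (Umap_cases (relpos P x)) as [-> | [-> | [-> | ->]]]; reflexivity.
Qed.

Lemma mslope_S lam n x :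
  let t := relpos (piece_of lam n x) x in
  (mid_zone t -> jumped lam (mslope lam n x) (mslope lam (S n) x)) /\
  (~ mid_zone t -> mslope lam (S n) x = mslope lam n x).
Proof.
  rewrite !mslope_piece_of, piece_of_S. set (P := piece_of lam n x).
  rewrite <- map_nth, split_piece_slopes by apply piece_of_nondegenerate.
  unfold mid_zone, jumped.
  destruct (Umap_cases (relpos P x)) as [-> | [-> | [-> | ->]]]; cbn;
    split; intros; lia || tauto.
Qed.

Lemma mslope_nonzero_ge lam n x :
  mslope lam n x <> 0 -> sqrt (36 * lam ^ 2 - 1) <= Rabs (mslope lam n x).
Proof.
  induction n as [|n IH]; intros Hn; [now rewrite mslope_0 in Hn|].
  destruct (mslope_S lam n x) as [Hmid Hout].
  destruct (classic (mid_zone (relpos (piece_of lam n x) x))) as [H | H].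
  - now apply jumped_abs_ge_sqrt with (m := mslope lam n x), Hmid.
  - rewrite (Hout H) in Hn |- *. now apply IH.
Qed.

Lemma mslope_le_mplus lam n x : Rabs (mslope lam n x) <= mplus lam n.
Proof.
  rewrite mslope_piece_of, mplus_pieces.
  apply fold_Rmax_ub, (in_map (fun P => Rabs (pslope P))), piece_of_In.
Qed.

(* The orbit [T^n x] follows the relative position [t_n] of [x] up to the
   reflection [t -> 1 - t] ([zone_shift] has the branch [6t - 3] where [Tmap]
   has [4 - 6t]).  At breakpoints the two may disagree, but only by sending the
   orbit to one of the fixed points 0, 1 of [Tmap]. *)
Definition tracks (y t : R) : Prop := y = t \/ y = 1 - t \/ y = 0 \/ y = 1.

Lemma zone_shift_unit t : 0 <= t <= 1 -> 0 <= zone_shift t <= 1.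
Proof. unfold zone_shift, Umap. repeat destruct Rlt_dec; lra. Qed.

Lemma Tmap_tracks y t : 0 <= t <= 1 -> tracks y t -> tracks (Tmap y) (zone_shift t).
Proof.
  unfold tracks, zone_shift, Tmap, Umap. intros Ht Hy.
  destruct Hy as [-> | [-> | [-> | ->]]]; repeat destruct Rlt_dec; lra.
Qed.

Lemma mid_zone_tracks y t : 0 <= t <= 1 -> tracks y t -> mid_zone y ->
  mid_zone t \/ Tmap y = 0 \/ Tmap y = 1.
Proof.
  unfold tracks, mid_zone, Tmap, Umap. intros Ht Hy.
  destruct Hy as [-> | [-> | [-> | ->]]]; repeat destruct Rlt_dec; intros [H | H];
    try discriminate H; lra || tauto.
Qed.

Lemma iter_Tmap_stuck x k j :
  (Nat.iter k Tmap x = 0 \/ Nat.iter k Tmap x = 1) -> (k <= j)%nat ->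
  Nat.iter j Tmap x = 0 \/ Nat.iter j Tmap x = 1.
Proof.
  intros Hk Hj. induction Hj as [|j _ IH]; [exact Hk|].
  rewrite Nat.iter_succ. destruct IH as [-> | ->]; unfold Tmap; repeat destruct Rlt_dec; lra.
Qed.

Lemma not_mid_zone_0_1 y : y = 0 \/ y = 1 -> ~ mid_zone y.
Proof.
  unfold mid_zone, Umap. intros [-> | ->]; repeat destruct Rlt_dec; try lra;
    intros [H | H]; discriminate H.
Qed.

Lemma relpos_piece_of_tracks lam x n : 0 <= x <= 1 ->
  let t := relpos (piece_of lam n x) x in 0 <= t <= 1 /\ tracks (Nat.iter n Tmap x) t.
Proof.
  intros Hx. induction n as [|n [Ht Htr]]; cbn zeta in *.
  - rewrite relpos_piece_of_0. unfold tracks. cbn. lra.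
  - rewrite relpos_piece_of_S. split.
    + now apply zone_shift_unit.
    + now apply Tmap_tracks.
Qed.

Lemma beta12_S_not_mid x k : ~ mid_zone (Nat.iter k Tmap x) -> beta12 x (S k) = beta12 x k.
Proof.
  unfold mid_zone. intros Hk. cbn [beta12]. unfold digit.
  destruct (Nat.eqb_spec (Umap (Nat.iter k Tmap x)) 1),
    (Nat.eqb_spec (Umap (Nat.iter k Tmap x)) 2);
    cbn; tauto || lia.
Qed.

Lemma mid_digits_often x : ~ in_Etilde x ->
  forall N, exists k, (N <= k)%nat /\ mid_zone (Nat.iter k Tmap x).
Proof.
  intros HE N. apply NNPP. intros Hno. apply HE. exists N. intros n Hn.
  induction Hn as [|n Hn IH]; [reflexivity|].
  rewrite beta12_S_not_mid; [exact IH|]. intros Hmid. apply Hno. eauto.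
Qed.

Lemma mid_zones_often lam x : 0 <= x <= 1 -> ~ in_Etilde x ->
  forall N, exists k, (N <= k)%nat /\ mid_zone (relpos (piece_of lam k x) x).
Proof.
  intros Hx HE N. destruct (mid_digits_often x HE N) as (k & Hk & Hmid).
  exists k. split; [exact Hk|].
  destruct (relpos_piece_of_tracks lam x k Hx) as [Ht Htr].
  destruct (mid_zone_tracks _ _ Ht Htr Hmid) as [H | Hstuck]; [exact H|].
  (* once the orbit reaches a fixed point 0 or 1 it produces no more digits 1, 2 *)
  destruct (mid_digits_often x HE (S k)) as (j & Hj & Hmid').
  exfalso. apply (not_mid_zone_0_1 _ (iter_Tmap_stuck x (S k) j Hstuck Hj) Hmid').
Qed.

Lemma is_lim_seq_p_infty_expanding (u : nat -> R) (r : R) : 1 < r ->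
  (forall n, u n <= u (S n)) ->
  (forall N, exists n, (N <= n)%nat /\ r * Rmax 1 (u n) <= u (S n)) ->
  is_lim_seq u p_infty.
Proof.
  intros Hr Hmono Hexp.
  assert (Hmono' : forall i j, (i <= j)%nat -> u i <= u j).
  { intros i j Hij. induction Hij as [|j _ IH]; [lra|].
    eapply Rle_trans; [exact IH|apply Hmono]. }
  assert (Hpow : forall K, exists N, forall n, (N <= n)%nat -> r ^ S K <= u n).
  { induction K as [|K [N HN]].
    - destruct (Hexp 0%nat) as (n & _ & Hn). exists (S n). intros j Hj.
      pose proof (Rmax_l 1 (u n)). pose proof (Hmono' _ _ Hj). rewrite pow_1. nra.
    - destruct (Hexp N) as (n & Hn & Hexpn). exists (S n). intros j Hj.
      pose proof (HN n Hn). pose proof (Rmax_r 1 (u n)). pose proof (Hmono' _ _ Hj).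
      rewrite <- tech_pow_Rmult. nra. }
  apply is_lim_seq_spec. intros M.
  destruct (proj2 (is_lim_seq_spec _ _) (is_lim_seq_geom_p r Hr) M) as [K HK].
  destruct (Hpow K) as [N HN]. exists N. intros n Hn.
  specialize (HK (S K) ltac:(lia)). specialize (HN n Hn). lra.
Qed.

Lemma abs_mslope_S lam n x : 1/3 <= lam ->
  Rabs (mslope lam n x) <= Rabs (mslope lam (S n) x) /\
  (mid_zone (relpos (piece_of lam n x) x) ->
   (6 * lam - 1) * Rmax 1 (Rabs (mslope lam n x)) <= Rabs (mslope lam (S n) x)).
Proof.
  intros Hl. destruct (mslope_S lam n x) as [Hmid Hout].
  assert (Hexp : mid_zone (relpos (piece_of lam n x) x) ->
    (6 * lam - 1) * Rmax 1 (Rabs (mslope lam n x)) <= Rabs (mslope lam (S n) x)).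
  { intros H. apply jumped_abs_expands; [lra|]. now apply Hmid. }
  split; [|exact Hexp].
  destruct (classic (mid_zone (relpos (piece_of lam n x) x))) as [H | H].
  - specialize (Hexp H). pose proof (Rmax_r 1 (Rabs (mslope lam n x))).
    pose proof (Rmax_l 1 (Rabs (mslope lam n x))). nra.
  - rewrite (Hout H). lra.
Qed.

Lemma abs_mslope_p_infty lam x : 1/3 < lam -> 0 <= x <= 1 -> ~ in_Etilde x ->
  is_lim_seq (fun n => Rabs (mslope lam n x)) p_infty.
Proof.
  intros Hl Hx HE. apply (is_lim_seq_p_infty_expanding _ (6 * lam - 1)); [lra| |].
  - intros n. apply abs_mslope_S. lra.
  - intros N. destruct (mid_zones_often lam x Hx HE N) as (k & Hk & Hmid).
    exists k. split; [exact Hk|]. apply abs_mslope_S; [lra|exact Hmid].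
Qed.

Theorem lemma3p5 (lam : R) (Hlam : 1/6 < lam < 5/6) :
  (forall x : R, 0 <= x <= 1 -> ~ in_E x ->
     forall n : nat, (1 <= n)%nat -> mslope lam n x <> 0 ->
       sqrt (36 * lam ^ 2 - 1) <= Rabs (mslope lam n x) <= mplus lam n)
  /\
  (exists c C : R, 0 < c /\ c <= C /\
     forall n : nat, (1 <= n)%nat ->
       c * (6 * lam + 1) ^ n <= mplus lam n <= C * (6 * lam + 1) ^ n)
  /\
  (1/3 < lam ->
     forall x : R, 0 <= x <= 1 -> ~ in_Etilde x ->
       is_lim_seq (fun n : nat => Rabs (mslope lam n x)) p_infty).
Proof.
  split; [|split].
  - intros x _ _ n _ Hn. split.
    + now apply mslope_nonzero_ge.
    + apply mslope_le_mplus.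
  - apply mplus_asymptotics. lra.
  - intros Hl x Hx HE. now apply abs_mslope_p_infty.
Qed.
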